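(* Let $H$ be an $l$-ARS graph. Then $\chi_c(H)=l$, and there exists an integer $n_0$ such that every graph $G\in\mathrm{red}(\mathrm{Forb}(H))$ with $|V(G)|\ge n_0$ has at most one non-edge. In particular, $H$ is $2$-critical.
   Context: All graphs are finite and simple; $\mathrm{Forb}(H)$ is the family of graphs with no induced subgraph isomorphic to $H$. A non-edge is a pair of distinct non-adjacent vertices. $\mathcal{C}$ is the family of complete graphs; $\iota(J)$ is the family of graphs isomorphic to induced subgraphs of $J$; $\mathcal{F}_1\vee\mathcal{F}_2$ (resp. $\mathcal{F}_1\wedge\mathcal{F}_2$) is the family of disjoint unions (resp. joins) of a graph in $\mathcal{F}_1$ and a graph in $\mathcal{F}_2$. $K_1$ is the one-vertex graph, $S_3$ the edgeless graph on $3$ vertices, $C_4$ the $4$-cycle, $\bar P_3$ the complement of the $3$-vertex path. $\mathcal{H}(s,t)$ is the family of graphs whose vertex set can be partitioned into $s$ stable sets and $t$ cliques. For a hereditary family $\mathcal{F}$, $\chi_c(\mathcal{F})$ is the maximum $l$ with $\mathcal{H}(s,l-s)\subseteq\mathcal{F}$ for some $0\le s\le l$; $\chi_c(H)=\chi_c(\mathrm{Forb}(H))$ (equivalently, the maximum $l$ such that $H\notin\mathcal{H}(s,t)$ for some $s,t\ge0$ with $s+t=l$). With $l=\chi_c(\mathcal{F})$, a graph $J$ is $\mathcal{F}$-reduced if there is $0\le s\le l-1$ such that $\mathcal{F}$ contains every graph whose vertex set partitions into $l$ parts, one inducing a graph isomorphic to an induced subgraph of $J$, $s$ stable sets and $l-1-s$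 cliques; $\mathrm{red}(\mathcal{F})$ is the family of $\mathcal{F}$-reduced graphs. A graph $G$ is an $s$-star if there is $S\subseteq V(G)$, $|S|\le s$, with $G-S$ complete or edgeless and every vertex of $S$ adjacent to all or to none of $V(G)\setminus S$. A graph $H$ is $s$-critical if there is $n_0$ such that every $K\in\mathrm{red}(\mathrm{Forb}(H))$ with $|V(K)|\ge n_0$ is an $s$-star. A graph $H$ is an $l$-ARS-graph ($l$ a positive integer) if: (ARS1) for every $1\le s\le l$, $V(H)$ can be partitioned into $s$ stable sets and $l-s$ cliques; (ARS2) for each $\mathcal{G}\in\{\iota(K_1)\vee\mathcal{C},\iota(S_3)\wedge\mathcal{C},\iota(C_4)\wedge\mathcal{C},\iota(\bar P_3)\wedge\mathcal{C}\}$, $V(H)$ can be partitioned into $l-1$ cliques and a set inducing a graph in $\mathcal{G}$; (ARS3) there is a partition $\mathcal{X}_0=\{X_1,\dots,X_l\}$ of $V(H)$ with $X_1,\dots,X_{l-2}$ cliques, each of $H[X_{l-1}],H[X_l]$ having exactly one non-edge, and the four vertices of these two non-edges forming an independent set; (ARS4) for every partition $\mathcal{X}\ne\mathcal{X}_0$ of $V(H)$ with $|\mathcal{X}|=l$ some $X\in\mathcal{X}$ has $H[X]$ with at least two non-edges. *)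

From mathcomp Require Import all_boot.
Set Implicit Arguments. Unset Strict Implicit. Unset Printing Implicit Defensive.

Record sgraph := SGraph {
  V : finType;
  adj : rel V;
  adj_sym : symmetric adj;
  adj_irr : irreflexive adj }.

Definition mkadj n (r : rel 'I_n) : rel 'I_n :=
  fun x y => (x != y) && (r x y || r y x).
Lemma mkadj_sym n (r : rel 'I_n) : symmetric (mkadj r).
Proof. by move=> x y; rewrite /mkadj eq_sym orbC. Qed.
Lemma mkadj_irr n (r : rel 'I_n) : irreflexive (mkadj r).
Proof. by move=> x; rewrite /mkadj eqxx. Qed.
Definition mkgraph n (r : rel 'I_n) : sgraph :=
  @SGraph 'I_n (mkadj r) (@mkadj_sym n r) (@mkadj_irr n r).

Definition K1 : sgraph := @mkgraph 1 (fun _ _ => false).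
Definition S3 : sgraph := @mkgraph 3 (fun _ _ => false).
Definition C4 : sgraph :=
  @mkgraph 4 (fun x y => nat_of_ord y == (nat_of_ord x).+1 %% 4).
Definition P3bar : sgraph :=
  @mkgraph 3 (fun x y => (nat_of_ord x == 0) && (nat_of_ord y == 2)).

Definition induced (J G : sgraph) : Prop :=
  exists f : V J -> V G, injective f /\
    forall x y, adj x y = adj (f x) (f y).

(* G[A] is isomorphic to an induced subgraph of J, i.e. G[A] lies in iota(J) *)
Definition induced_on (G : sgraph) (A : {set V G}) (J : sgraph) : Prop :=
  exists g : {x : V G | x \in A} -> V J, injective g /\
    forall x y, adj (val x) (val y) = adj (g x) (g y).

Definition family := sgraph -> Prop.
Definition subfam (F1 F2 : family) : Prop := forall G, F1 G -> F2 G.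
Definition Forb (H : sgraph) : family := fun G => ~ induced H G.

Definition stable (G : sgraph) (A : {set V G}) : Prop :=
  forall x y, x \in A -> y \in A -> ~~ adj x y.
Definition clique (G : sgraph) (A : {set V G}) : Prop :=
  forall x y, x \in A -> y \in A -> x != y -> adj x y.

(* H(s,t): V(G) partitions into s stable sets and t cliques (parts may be
   empty); part i is stable if i < s and a clique otherwise. *)
Definition Hst (s t : nat) : family := fun G =>
  exists f : V G -> 'I_(s + t),
    forall i : 'I_(s + t),
      (i < s -> stable [set x | f x == i]) /\
      (s <= i -> clique [set x | f x == i]).

Definition chi_c_ok (F : family) (l : nat) : Prop :=
  exists2 s, s <= l & subfam (Hst s (l - s)) F.
Definition chi_c (F : family) (l : nat) : Prop :=
  chi_c_ok F l /\ forall l', chi_c_ok F l' -> l' <= l.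

Definition reduced (F : family) (J : sgraph) : Prop :=
  exists l, chi_c F l /\
    exists2 s, s <= l.-1 &
      forall G : sgraph,
        (exists f : V G -> option 'I_(l.-1),
           induced_on [set x | f x == None] J /\
           forall i : 'I_(l.-1),
             (i < s -> stable [set x | f x == Some i]) /\
             (s <= i -> clique [set x | f x == Some i])) ->
        F G.

Definition star (s : nat) (G : sgraph) : Prop :=
  exists S : {set V G}, #|S| <= s /\
    (clique (~: S) \/ stable (~: S)) /\
    forall v, v \in S ->
      (forall w, w \notin S -> adj v w) \/ (forall w, w \notin S -> ~~ adj v w).

Definition critical (s : nat) (H : sgraph) : Prop :=
  exists n0, forall K : sgraph, reduced (Forb H) K -> n0 <= #|V K| -> star s K.

Definition nonedge (G : sgraph) (u v : V G) : bool := (u != v) && ~~ adj u v.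

Definition unique_nonedge (G : sgraph) (X : {set V G}) (a b : V G) : Prop :=
  [/\ a \in X, b \in X, nonedge a b &
     forall u v, u \in X -> v \in X -> nonedge u v -> [set u; v] = [set a; b]].

Definition two_nonedges (G : sgraph) (X : {set V G}) : Prop :=
  exists u v u' v', [/\ u \in X, v \in X, u' \in X & v' \in X] /\
    [/\ nonedge u v, nonedge u' v' & [set u; v] != [set u'; v']].

Definition union_clique (J : sgraph) (G : sgraph) (P : {set V G}) : Prop :=
  exists2 A : {set V G}, A \subset P &
    [/\ induced_on A J, clique (P :\: A) &
        forall x y, x \in A -> y \in P :\: A -> ~~ adj x y].
Definition join_clique (J : sgraph) (G : sgraph) (P : {set V G}) : Prop :=
  exists2 A : {set V G}, A \subset P &
    [/\ induced_on A J, clique (P :\: A) &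
        forall x y, x \in A -> y \in P :\: A -> adj x y].

(* V(H) partitions into l-1 cliques (possibly empty) and a set P with Q P *)
Definition cliques_plus (H : sgraph) (l : nat) (Q : {set V H} -> Prop) : Prop :=
  exists f : V H -> option 'I_(l.-1),
    Q [set x | f x == None] /\
    forall i : 'I_(l.-1), clique [set x | f x == Some i].

(* l-ARS graph; partitions in (ARS3)/(ARS4) are set partitions into
   nonempty blocks (mathcomp's [partition]). *)
Definition ARS (H : sgraph) (l : nat) : Prop :=
  [/\ 0 < l,
    (* ARS1 *)
    (forall s, 1 <= s <= l -> Hst s (l - s) H),
    (* ARS2 *)
    [/\ cliques_plus l (@union_clique K1 H),
        cliques_plus l (@join_clique S3 H),
        cliques_plus l (@join_clique C4 H) &
        cliques_plus l (@join_clique P3bar H)] &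
    (* ARS3 and ARS4 *)
    exists X0 : {set {set V H}},
      [/\ partition X0 [set: V H], #|X0| = l,
        (exists X Y a b c d,
           [/\ X \in X0, Y \in X0, X != Y,
               unique_nonedge X a b & unique_nonedge Y c d] /\
           [/\ (forall Z, Z \in X0 -> Z != X -> Z != Y -> clique Z) &
               stable [set a; b; c; d]]) &
        forall X : {set {set V H}}, partition X [set: V H] -> #|X| = l ->
          X != X0 -> exists2 Z, Z \in X & two_nonedges Z]].

Definition at_most_one_nonedge (G : sgraph) : Prop :=
  forall u v u' v' : V G, nonedge u v -> nonedge u' v' -> [set u; v] = [set u'; v'].

(* The lower bound χ_c(Forb H) >= l is witnessed by H(0, l): a partition of H
   into l cliques can be rearranged into one with l nonempty blocks, which
   differs from X0 (a block of X0 has a non-edge), so by (ARS4) one of its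
   blocks is not a clique after all. The upper bound holds because (ARS1), and
   (ARS2) for K1 ∨ C, place H in every H(s, l + 1 - s).
   Let G be reduced. As χ_c = l, H itself does not split into a part embedding
   in G, s stable sets and l - 1 - s cliques. Moving one stable class (resp.
   one clique class, if s > 0) of an (ARS1)-partition into that part shows
   that G has no stable set, resp. no clique, with more than |H| vertices; by
   Ramsey, a large G then forces s = 0. Now (ARS2) for K1 ∨ C bounds each
   non-neighbourhood by the Ramsey number R, so any four vertices have R common
   neighbours, among which there is a clique with more than |H| vertices. Two
   distinct non-edges of G span an induced S3, complement of P3 or C4, and
   joined to that clique they realise the corresponding case of (ARS2) in G. *)

From Pilot Require Import Defs.
From mathcomp Require Import all_boot zify.
Set Implicit Arguments. Unset Strict Implicit. Unset Printing Implicit Defensive.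

Definition homogeneous (G : sgraph) (c : bool) (X : {set V G}) : Prop :=
  {in X &, forall x y, x != y -> adj x y = c}.

Lemma stable_homogeneous (G : sgraph) (X : {set V G}) :
  stable X -> homogeneous false X.
Proof. by move=> sX x y xX yX _; apply/negbTE/sX. Qed.

Lemma clique_subset (G : sgraph) (A B : {set V G}) :
  A \subset B -> clique B -> clique A.
Proof. by move=> /subsetP AB cB x y /AB xB /AB yB; apply: cB. Qed.

Lemma clique_set1 (G : sgraph) (x : V G) : clique [set x].
Proof. by move=> u v /set1P-> /set1P->; rewrite eqxx. Qed.

Lemma clique_setU1 (G : sgraph) (x : V G) (C : {set V G}) :
  {in C, forall y, adj x y} -> clique C -> clique (x |: C).
Proof.
move=> xC cC u v /setU1P[->|uC] /setU1P[->|vC]; rewrite ?eqxx //.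
- by move=> _; apply: xC.
- by move=> _; rewrite adj_sym; apply: xC.
- exact: cC.
Qed.

Lemma stable_setU1 (G : sgraph) (x : V G) (S : {set V G}) :
  {in S, forall y, ~~ adj x y} -> stable S -> stable (x |: S).
Proof.
move=> xS sS u v /setU1P[->|uS] /setU1P[->|vS].
- by rewrite adj_irr.
- exact: xS.
- by rewrite adj_sym; apply: xS.
- exact: sS.
Qed.

Lemma ramsey (G : sgraph) a b (A : {set V G}) : 2 ^ (a + b) <= #|A| ->
  (exists2 C : {set V G}, C \subset A & clique C /\ a <= #|C|) \/
  (exists2 S : {set V G}, S \subset A & stable S /\ b <= #|S|).
Proof.
have clique0 : clique (set0 : {set V G}) by move=> x y; rewrite inE.
elim: a b A => [|a IHa] b A; first by left; exists set0; rewrite ?sub0set.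
elim: b A => [|b IHb] A hA.
  by right; exists set0; rewrite ?sub0set //; split=> // x y; rewrite inE.
have [x xA] : exists x, x \in A by apply/card_gt0P; apply: leq_trans hA; rewrite expn_gt0.
pose N := (A :\ x) :&: [set y | adj x y]; pose M := (A :\ x) :\: [set y | adj x y].
have NA : N \subset A by apply/subsetP => y; rewrite !inE => /andP[/andP[]].
have MA : M \subset A by apply/subsetP => y; rewrite !inE => /andP[_ /andP[]].
have [hN|hM] : 2 ^ (a + b.+1) <= #|N| \/ 2 ^ (a.+1 + b) <= #|M|.
  have cardA : #|A| = #|N| + #|M| + 1.
    by rewrite cardsID (cardsD1 x A) xA addnC.
  have : 2 ^ (a.+1 + b.+1) = 2 ^ (a + b.+1) + 2 ^ (a.+1 + b).
    by rewrite addSn addnS !expnS; lia.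
  lia.
- have [[C CN [cC aC]]|[S SN [sS bS]]] := IHa b.+1 N hN; last first.
    by right; exists S; [exact: subset_trans NA|].
  have xC : x \notin C by apply/negP => /(subsetP CN); rewrite !inE eqxx.
  left; exists (x |: C); first by rewrite subUset sub1set xA (subset_trans CN NA).
  split; last by rewrite cardsU1 xC.
  by apply: clique_setU1 => // y /(subsetP CN); rewrite inE => /andP[_]; rewrite inE.
- have [[C CM [cC aC]]|[S SM [sS bS]]] := IHb M hM.
    by left; exists C; [exact: subset_trans MA|].
  have xS : x \notin S by apply/negP => /(subsetP SM); rewrite !inE eqxx andbF.
  right; exists (x |: S); first by rewrite subUset sub1set xA (subset_trans SM MA).
  split; last by rewrite cardsU1 xS.
  by apply: stable_setU1 => // y /(subsetP SM); rewrite !inE => /andP[].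
Qed.

Lemma leq_card_inj_on (T T' : finType) (D : {set T}) (K : {set T'}) (k0 : T') :
  #|D| <= #|K| ->
  exists2 f : T -> T', {in D &, injective f} & {in D, forall x, f x \in K}.
Proof.
move=> DK; exists (fun x => nth k0 (enum K) (index x (enum D))).
  have ltK x : x \in D -> index x (enum D) < size (enum K).
    by rewrite -mem_enum -index_mem -!cardE => /leq_trans; apply.
  move=> x y xD yD /eqP; rewrite nth_uniq ?enum_uniq ?ltK // => /eqP.
  by move/(congr1 (nth x (enum D))); rewrite !nth_index ?mem_enum.
move=> x xD; rewrite -mem_enum mem_nth //.
by move: xD; rewrite -mem_enum -index_mem -!cardE => /leq_trans; apply.
Qed.

Lemma induced_on_glue (H G : sgraph) (P A : {set V H}) (K : {set V G}) (b c : bool)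
    (g : {x | x \in A} -> V G) :
  A \subset P -> injective g -> (forall x y, adj (val x) (val y) = adj (g x) (g y)) ->
  homogeneous c (P :\: A) -> homogeneous c K ->
  (forall x y, x \in A -> y \in P :\: A -> adj x y = b) ->
  (forall x k, k \in K -> adj (g x) k = b /\ g x != k) ->
  #|P :\: A| < #|K| -> induced_on P G.
Proof.
move=> AP ginj gadj hD hK bA bK DK.
(* The bound is strict only so that K provides a default vertex. *)
have [k0 _] : exists k0, k0 \in K by apply/card_gt0P; apply: leq_ltn_trans DK.
have [h hinj hK'] := leq_card_inj_on k0 (ltnW DK).
have inD x : x \in P -> x \notin A -> x \in P :\: A by rewrite inE => -> ->.
pose f (x : {x | x \in P}) := if insub (val x) is Some y then g y else h (val x).
exists f; split.
  move=> [x xP] [y yP] E; apply: val_inj; move: E; rewrite /f /=.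
  case: insubP => [u _ <-|xA]; case: insubP => [v _ <-|yA].
  - by move/ginj ->.
  - by move=> E; have [_] := bK u _ (hK' _ (inD _ yP yA)); rewrite E eqxx.
  - by move=> E; have [_] := bK v _ (hK' _ (inD _ xP xA)); rewrite E eqxx.
  - exact: hinj (inD _ xP xA) (inD _ yP yA).
move=> [x xP] [y yP]; rewrite /f /=.
case: insubP => [u uA <-|xA]; case: insubP => [v vA <-|yA].
- exact: gadj.
- by rewrite bA ?(valP u) ?inD //; have [] := bK u _ (hK' _ (inD _ yP yA)).
- rewrite adj_sym bA ?(valP v) ?inD // adj_sym.
  by have [] := bK v _ (hK' _ (inD _ xP xA)).
- have [<-|xy] := eqVneq x y; first by rewrite !adj_irr.
  rewrite hD ?hK ?hK' ?inD //.
  by apply: contra xy => /eqP/hinj; rewrite !inD // => ->.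
Qed.

Lemma Hst_induced (H G : sgraph) s t : induced H G -> Hst s t G -> Hst s t H.
Proof.
move=> [e [einj eadj]] [f hf]; exists (f \o e) => i.
have [st cl] := hf i; split=> hi u v; rewrite !inE => fu fv.
- by rewrite eadj; apply: st; rewrite ?inE.
- by move=> uv; rewrite eadj; apply: cl; rewrite ?inE ?(inj_eq einj).
Qed.

Lemma HstW (G : sgraph) s t s' t' : s <= s' -> t <= t' -> Hst s t G -> Hst s' t' G.
Proof.
move=> ss' tt' [f hf].
pose h (i : 'I_(s + t)) : nat := if i < s then (i : nat) else i - s + s'.
have h_lt i : h i < s' + t' by rewrite /h; case: ifP; have := ltn_ord i; lia.
have h_inj : injective h.
  by move=> i j; rewrite /h => E; apply: ord_inj; move: E; do 2 case: ifP; lia.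
exists (fun x => Ordinal (h_lt (f x))) => i; split=> hi u v; rewrite !inE.
all: move=> /eqP/(congr1 val)/= fu /eqP/(congr1 val)/= fv.
all: have fuv : f u = f v by apply: h_inj; rewrite fu fv.
all: have /= fu_s := ltn_ord (f u); move: fu; rewrite /h.
- case: ifP => fus fu; last lia.
  by apply: (hf (f u)).1; rewrite // inE ?fuv.
- case: ifP => fus fu; first lia.
  by apply: (hf (f u)).2; [lia | rewrite inE | rewrite inE fuv].
Qed.

Lemma surjective_colouring (T : finType) n (P : {set T} -> Prop) (f : T -> 'I_n) :
  n <= #|T| -> (forall A B : {set T}, A \subset B -> P B -> P A) ->
  (forall x, P [set x]) -> (forall i, P [set x | f x == i]) ->
  exists2 g : T -> 'I_n, (forall i, exists x, g x = i) & forall i, P [set x | g x == i].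
Proof.
move=> nT Psub P1; move: {2}_.+1 (ltnSn (n - #|f @: T|)) => k.
elim: k f => // k IH f hk hf.
have [/forallP f_onto|] := boolP [forall i, i \in f @: T].
  by exists f => // i; have /imsetP[x _ ->] := f_onto i; exists x.
rewrite negb_forall => /existsP[i fi].
have /injectivePn[x [y xy fxy]] : ~~ injectiveb f.
  apply/injectiveP => /card_imset finj.
  have : f @: T \subset [set~ i].
    apply/subsetP => _ /imsetP[z _ ->]; rewrite !inE.
    by apply: contraNneq fi => <-; apply: imset_f.
  move/subset_leq_card; rewrite cardsC1 card_ord finj => /(leq_trans nT).
  by have := ltn_ord i; lia.
pose g z := if z == x then i else f z.
have fg : f @: T \proper g @: T.
  apply/properP; split.
    apply/subsetP => _ /imsetP[z _ ->]; apply/imsetP.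
    have [->|zx] := eqVneq z x; first by exists y; rewrite // /g eq_sym (negbTE xy).
    by exists z; rewrite // /g (negbTE zx).
  by exists i => //; apply/imsetP; exists x; rewrite // /g eqxx.
apply: (IH g).
  by have := proper_card fg; have := max_card (g @: T); rewrite card_ord; lia.
move=> j; have [->|ji] := eqVneq j i.
  suff -> : [set z | g z == i] = [set x] by [].
  apply/setP => z; rewrite !inE /g; case: (eqVneq z x) => [_|_]; first exact: eqxx.
  by apply: contraNF fi => /eqP <-; apply: imset_f.
apply: Psub (hf j); apply/subsetP => z; rewrite !inE /g.
by have [_|//] := eqVneq z x; rewrite eq_sym (negbTE ji).
Qed.

Lemma card_partition_leq (T : finType) (X : {set {set T}}) (D : {set T}) :
  partition X D -> #|X| <= #|D|.
Proof.
move=> pX; rewrite (card_partition pX) -sum1_card leq_sum // => B BX.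
by rewrite card_gt0 (partition_neq0 pX BX).
Qed.

Lemma Hst0_clique_partition (H : sgraph) n : n <= #|V H| -> Hst 0 n H ->
  exists X : {set {set V H}},
    [/\ partition X [set: V H], #|X| = n & {in X, forall Z, clique Z}].
Proof.
move=> nH [f hf].
have [g g_onto gcl] := surjective_colouring nH (@clique_subset H) (@clique_set1 H)
  (fun i => (hf i).2 (leq0n i)).
pose F i := [set x | g x == i].
have F0 : set0 \notin F @: [set: 'I_n].
  apply/imsetP => -[i _ Fi]; have [x gx] := g_onto i.
  by have := in_set0 x; rewrite Fi inE gx eqxx.
have [tiF Finj] : trivIset (F @: [set: 'I_n]) /\ {in [set: 'I_n] &, injective F}.
  apply: trivIimset F0 => i j _ _ ji; rewrite -setI_eq0; apply/eqP/setP => x.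
  by rewrite !inE; apply/negP => /andP[/eqP-> /eqP gj]; rewrite gj eqxx in ji.
exists (F @: [set: 'I_n]); split.
- apply/and3P; split => //; rewrite cover_imset; apply/eqP/setP => x.
  by rewrite inE; apply/bigcupP; exists (g x); rewrite ?inE.
- by rewrite card_in_imset // cardsT card_ord.
- by move=> _ /imsetP[i _ ->]; apply: gcl.
Qed.

Lemma ARS_not_Hst0 (H : sgraph) l : ARS H l -> ~ Hst 0 l H.
Proof.
case=> _ _ _ [X0 [pX0 cardX0
  [[B [_ [a [b [_ [_ [[BX0 _ _ [aB bB ab _] _] _]]]]]]] ars4]]].
move=> /(Hst0_clique_partition _) [|X [pX cardX cliqueX]].
  by rewrite -cardX0 -cardsT; apply: card_partition_leq.
have [|Z ZX [u [v [u' [v' [[uZ vZ _ _] [/andP[uv nuv] _ _]]]]]]] := ars4 X pX cardX.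
  apply: contraTneq BX0 => <-; apply/negP => /cliqueX/(_ a b aB bB).
  by case/andP: ab => ab /negP nab /(_ ab).
by move: nuv; rewrite (cliqueX Z ZX u v uZ vZ uv).
Qed.

Lemma induced_on_K1_clique (H : sgraph) (A : {set V H}) : induced_on A K1 -> clique A.
Proof.
move=> [g [ginj _]] x y xA yA.
have g1 (z : {z | z \in A}) : g z = ord0 by apply: ord_inj; case: (g z) => -[].
have /(congr1 val)/= -> :=
  ginj (exist _ x xA) (exist _ y yA) (etrans (g1 _) (esym (g1 _))).
by rewrite eqxx.
Qed.

Lemma Hst0S_of_union_K1 (H : sgraph) l : 0 < l ->
  cliques_plus l (@union_clique K1 H) -> Hst 0 l.+1 H.
Proof.
move=> l_gt0 [f [[A AP [/induced_on_K1_clique cA cPA _]] cl]].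
pose k x : nat := if f x is Some i then i else if x \in A then l.-1 else l.
have k_lt x : k x < l.+1.
  by rewrite /k; case: (f x) => [i|]; [have := ltn_ord i | case: ifP]; lia.
exists (fun x => Ordinal (k_lt x)) => j; split=> // _ u v; rewrite !inE.
move=> /eqP <- /eqP/(congr1 val)/= kuv uv; move: kuv; rewrite /k.
case fu: (f u) => [i|]; case fv: (f v) => [i'|].
- move=> /ord_inj ii'; apply: (cl i) uv; rewrite inE ?fu ?fv ?ii' //.
- by have := ltn_ord i; case: ifP; lia.
- by have := ltn_ord i'; case: ifP; lia.
case: ifP => vA; case: ifP => uA; try lia; move=> _.
- exact: cA.
- by apply: cPA; rewrite // !inE ?uA ?vA ?fu ?fv.
Qed.

Lemma ARS_chi_c (H : sgraph) l : ARS H l -> chi_c (Forb H) l.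
Proof.
move=> ars; have [l_gt0 ars1 [uK1 _ _ _] _] := ars; split.
  exists 0 => // G HstG /Hst_induced/(_ HstG).
  by rewrite subn0; apply: ARS_not_Hst0.
move=> l' [s s_le HstF]; rewrite leqNgt; apply/negP => ltll'.
apply: (HstF H); last by exists id; split.
have [->|s_gt0] := posnP s.
  by apply: HstW (Hst0S_of_union_K1 l_gt0 uK1); lia.
have [s_le_l|lts] := leqP s l.
  by apply: HstW (ars1 s _); lia.
by apply: HstW (ars1 l _); lia.
Qed.

Lemma chi_c_unique (F : Defs.family) l l' : chi_c F l -> chi_c F l' -> l = l'.
Proof. by move=> [ok le_l] [ok' le_l']; apply/eqP; rewrite eqn_leq le_l ?le_l'. Qed.

Definition Hst_iota (J : sgraph) (n s : nat) (G : sgraph) : Prop :=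
  exists f : V G -> option 'I_n,
    induced_on [set x | f x == None] J /\
    forall i : 'I_n,
      (i < s -> stable [set x | f x == Some i]) /\
      (s <= i -> clique [set x | f x == Some i]).

Lemma reduced_Forb (H J : sgraph) l : chi_c (Forb H) l -> reduced (Forb H) J ->
  exists2 s, s <= l.-1 & ~ Hst_iota J l.-1 s H.
Proof.
move=> chiH [l' [chiH' [s s_le redJ]]].
rewrite -(chi_c_unique chiH chiH') in s_le redJ.
by exists s => // /redJ; apply; exists id; split.
Qed.

Lemma Hst_iota_unlift (J H : sgraph) n s (f : V H -> 'I_n.+1) (j0 : 'I_n.+1) :
  induced_on [set x | f x == j0] J ->
  (forall i : 'I_n,
     (i < s -> stable [set x | f x == lift j0 i]) /\
     (s <= i -> clique [set x | f x == lift j0 i])) ->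
  Hst_iota J n s H.
Proof.
have class0 : [set x | unlift j0 (f x) == None] = [set x | f x == j0].
  apply/setP => x; rewrite !inE.
  case: unliftP => [i ->|->]; rewrite ?eqxx //.
  by rewrite [lift _ _ == _]eq_sym (negbTE (neq_lift _ _)).
have classS i : [set x | unlift j0 (f x) == Some i] = [set x | f x == lift j0 i].
  apply/setP => x; rewrite !inE.
  by case: unliftP => [k ->|->]; rewrite ?(inj_eq lift_inj) // (negbTE (neq_lift _ _)).
by exists (fun x => unlift j0 (f x)); rewrite class0; split=> // i; rewrite classS.
Qed.

Lemma induced_on_homogeneous (H G : sgraph) (P : {set V H}) (K : {set V G}) c :
  homogeneous c P -> homogeneous c K -> #|P| < #|K| -> induced_on P G.
Proof.
move=> hP hK PK; have [k0 _] : exists k0, k0 \in K.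
  by apply/card_gt0P; apply: leq_ltn_trans PK.
have no_elt (x : {x : V H | x \in set0}) : False by case: x => x; rewrite inE.
apply: (@induced_on_glue _ _ P set0 K false c (fun _ => k0)); rewrite ?setD0 ?sub0set //.
all: by [move=> x; case: (no_elt x) | move=> x y; rewrite inE].
Qed.

Lemma Hst_iota_of_stable (J H : sgraph) s t (S : {set V J}) :
  Hst s.+1 t H -> stable S -> #|V H| < #|S| -> Hst_iota J (s + t) s H.
Proof.
move=> [f hf] sS cardS; apply: (@Hst_iota_unlift _ _ _ _ f ord0) => [|i].
  apply: induced_on_homogeneous (stable_homogeneous sS) _.
    exact/stable_homogeneous/(hf ord0).1.
  exact: leq_ltn_trans (max_card _) cardS.
by have := hf (lift ord0 i); rewrite lift0.
Qed.

Lemma Hst_iota_of_clique (J H : sgraph) s t (K : {set V J}) :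
  Hst s t.+1 H -> clique K -> #|V H| < #|K| -> Hst_iota J (s + t) s H.
Proof.
rewrite /Hst addnS => -[f hf] cK cardK.
apply: (@Hst_iota_unlift _ _ _ _ f ord_max) => [|i].
  apply: induced_on_homogeneous (cK : homogeneous true K) _.
    by apply: (hf ord_max).2; rewrite /= leq_addr.
  exact: leq_ltn_trans (max_card _) cardK.
by have := hf (lift ord_max i); rewrite lift_max.
Qed.

Definition iota_clique (J : sgraph) (b : bool) {H : sgraph} (P : {set V H}) : Prop :=
  exists2 A : {set V H}, A \subset P &
    [/\ induced_on A J, clique (P :\: A) &
        forall x y, x \in A -> y \in P :\: A -> adj x y = b].

Lemma cliques_plusW (H : sgraph) l (Q Q' : {set V H} -> Prop) :
  (forall P, Q P -> Q' P) -> cliques_plus l Q -> cliques_plus l Q'.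
Proof. by move=> QQ' [f [Qf cl]]; exists f; split=> //; apply: QQ'. Qed.

Lemma union_iota_clique (J H : sgraph) l :
  cliques_plus l (@union_clique J H) -> cliques_plus l (@iota_clique J false H).
Proof.
apply: cliques_plusW => P [A AP [iA cA nA]]; exists A => //; split=> // x y xA yP.
exact/negbTE/nA.
Qed.

Lemma join_iota_clique (J H : sgraph) l :
  cliques_plus l (@join_clique J H) -> cliques_plus l (@iota_clique J true H).
Proof. by apply: cliques_plusW => P [A AP [iA cA nA]]; exists A. Qed.

Lemma Hst_iota_of_iota_clique (J G H : sgraph) l b (e : V J -> V G) (K : {set V G}) :
  cliques_plus l (@iota_clique J b H) ->
  injective e -> (forall i j, adj i j = adj (e i) (e j)) ->
  clique K -> #|V H| < #|K| -> (forall j k, k \in K -> adj (e j) k = b /\ e j != k) ->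
  Hst_iota G l.-1 0 H.
Proof.
move=> [f [[A AP [[g [ginj gadj]] cA bA]] cl]] einj eadj cK cardK eK.
exists f; split=> [|i]; last by split.
apply: (@induced_on_glue _ _ _ A K b true (e \o g)) => //.
- exact: inj_comp.
- by move=> x y; rewrite gadj eadj.
- by move=> x; apply: eK.
- exact: leq_ltn_trans (max_card _) cardK.
Qed.

Lemma induced_mkgraph n (r : rel 'I_n) (G : sgraph) (e : 'I_n -> V G) :
  injective e -> (forall i j, i != j -> (r i j || r j i) = adj (e i) (e j)) ->
  induced (mkgraph r) G.
Proof.
move=> einj eadj; exists e; split=> // i j /=; rewrite /mkadj.
by have [->|ij] := eqVneq i j; [rewrite adj_irr | exact: eadj].
Qed.

Lemma nth_ord_inj (T : eqType) (x0 : T) (s : seq T) :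
  uniq s -> injective (fun i : 'I_(size s) => nth x0 s i).
Proof. by move=> us i j /eqP; rewrite nth_uniq // => /eqP/ord_inj. Qed.

Lemma induced_S3 (G : sgraph) (x y z : V G) : uniq [:: x; y; z] ->
  ~~ adj x y -> ~~ adj x z -> ~~ adj y z -> induced S3 G.
Proof.
move=> uxyz nxy nxz nyz.
apply: (@induced_mkgraph 3 _ G (nth x [:: x; y; z])).
  exact: (@nth_ord_inj _ x [:: x; y; z]).
by move=> [[|[|[|?]]] ?] [[|[|[|?]]] ?] //= _;
  rewrite ?(negbTE nxy) ?(negbTE nxz) ?(negbTE nyz) // adj_sym
     ?(negbTE nxy) ?(negbTE nxz) ?(negbTE nyz).
Qed.

Lemma induced_P3bar (G : sgraph) (x y z : V G) : uniq [:: x; y; z] ->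
  ~~ adj x y -> adj x z -> ~~ adj y z -> induced P3bar G.
Proof.
move=> uxyz nxy axz nyz.
apply: (@induced_mkgraph 3 _ G (nth x [:: x; y; z])).
  exact: (@nth_ord_inj _ x [:: x; y; z]).
by move=> [[|[|[|?]]] ?] [[|[|[|?]]] ?] //= _;
  rewrite ?axz ?(negbTE nxy) ?(negbTE nyz) // adj_sym ?axz ?(negbTE nxy) ?(negbTE nyz).
Qed.

Lemma induced_C4 (G : sgraph) (a b c d : V G) : uniq [:: a; b; c; d] ->
  adj a b -> adj b c -> adj c d -> adj d a -> ~~ adj a c -> ~~ adj b d -> induced C4 G.
Proof.
move=> uabcd aab abc acd ada nac nbd.
apply: (@induced_mkgraph 4 _ G (nth a [:: a; b; c; d])).
  exact: (@nth_ord_inj _ a [:: a; b; c; d]).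
by move=> [[|[|[|[|?]]]] ?] [[|[|[|[|?]]]] ?] //= _;
  rewrite ?aab ?abc ?acd ?ada ?(negbTE nac) ?(negbTE nbd) // adj_sym
    ?aab ?abc ?acd ?ada ?(negbTE nac) ?(negbTE nbd).
Qed.

Lemma nonadjacent_cherry_induced (G : sgraph) (x y z : V G) : uniq [:: y; x; z] ->
  ~~ adj y x -> ~~ adj x z -> induced S3 G \/ induced P3bar G.
Proof.
move=> uyxz nyx nxz; have [ayz|nyz] := boolP (adj y z).
  by right; apply: induced_P3bar uyxz nyx ayz nxz.
by left; apply: induced_S3 uyxz nyx nyz nxz.
Qed.

Lemma two_nonedges_induced (G : sgraph) (u v u' v' : V G) :
  nonedge u v -> nonedge u' v' -> [set u; v] != [set u'; v'] ->
  [\/ induced S3 G, induced P3bar G | induced C4 G].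
Proof.
move=> /andP[uv nuv] /andP[u'v' nu'v'] ne.
have cherry (x y z : V G) : y != x -> y != z -> x != z -> ~~ adj y x -> ~~ adj x z ->
    [\/ induced S3 G, induced P3bar G | induced C4 G].
  move=> yx yz xz nyx nxz.
  have uyxz : uniq [:: y; x; z] by rewrite /= !inE negb_or yx yz xz.
  by case: (nonadjacent_cherry_induced uyxz nyx nxz) => ?; [apply: Or31 | apply: Or32].
have nvu : ~~ adj v u by rewrite adj_sym.
have nv'u' : ~~ adj v' u' by rewrite adj_sym.
have vu : v != u by rewrite eq_sym.
have v'u' : v' != u' by rewrite eq_sym.
have [E|uu'] := eqVneq u u'.
  by subst u'; apply: (cherry u v v'); rewrite // eq_sym; apply: contraNneq ne => ->.
have [E|uv'] := eqVneq u v'.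
  by subst v'; apply: (cherry u v u'); rewrite // eq_sym;
    apply: contraNneq ne => ->; rewrite setUC.
have [E|vu'] := eqVneq v u'.
  by subst u'; apply: (cherry v u v'); rewrite // eq_sym;
    apply: contraNneq ne => ->; rewrite setUC.
have [E|vv'] := eqVneq v v'.
  by subst v'; apply: (cherry v u u'); rewrite // eq_sym; apply: contraNneq ne => ->.
have [auu'|nuu'] := boolP (adj u u'); last by apply: (cherry u v u'); rewrite // eq_sym.
have [auv'|nuv'] := boolP (adj u v'); last by apply: (cherry u v v'); rewrite // eq_sym.
have [avu'|nvu'] := boolP (adj v u'); last by apply: (cherry v u u'); rewrite // eq_sym.
have [avv'|nvv'] := boolP (adj v v'); last by apply: (cherry v u v'); rewrite // eq_sym.
apply: Or33; apply: (@induced_C4 G u u' v v') => //; last by rewrite adj_sym.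
  by rewrite /= !inE !negb_or uu' uv uv' (eq_sym u') vu' u'v' vv'.
by rewrite adj_sym.
Qed.

Lemma common_neighbours (G : sgraph) R (Q : {set V G}) :
  (forall v : V G, #|[set w | ~~ adj v w]| <= R) -> #|Q| * R + R <= #|V G| ->
  exists2 W : {set V G}, R <= #|W| & forall q w, q \in Q -> w \in W -> adj q w.
Proof.
move=> fewR cardG; pose N := \bigcup_(q in Q) [set w | ~~ adj q w].
have cardN : #|N| <= #|Q| * R.
  rewrite -sum_nat_const; apply: (big_ind2 (fun (A : {set V G}) n => #|A| <= n)) => //.
    by rewrite cards0.
  by move=> A m B n Am Bn; apply: leq_trans (leq_card_setU A B).1 (leq_add Am Bn).
exists (~: N); first by have := cardsC N; lia.
move=> q w qQ; rewrite inE; apply: contraNT => nqw.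
by apply/bigcupP; exists q; rewrite ?inE.
Qed.

Section ReducedGraph.

Variables (H G : sgraph) (l : nat).
Hypothesis ars1 : forall s, 0 < s <= l -> Hst s (l - s) H.

Lemma reduced_small_stable s : s < l -> ~ Hst_iota G l.-1 s H ->
  forall S : {set V G}, stable S -> #|S| <= #|V H|.
Proof.
move=> lt_sl noH S sS; rewrite leqNgt; apply/negP => cardS; apply: noH.
rewrite -(subnKC (_ : s <= l.-1)); last by lia.
apply: Hst_iota_of_stable sS cardS; rewrite -predn_sub -subnS.
by apply: ars1; lia.
Qed.

Lemma reduced_small_clique s : 0 < s < l -> ~ Hst_iota G l.-1 s H ->
  forall K : {set V G}, clique K -> #|K| <= #|V H|.
Proof.
move=> lt_sl noH K cK; rewrite leqNgt; apply/negP => cardK; apply: noH.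
rewrite -(subnKC (_ : s <= l.-1)); last by lia.
apply: Hst_iota_of_clique cK cardK; rewrite (_ : (l.-1 - s).+1 = l - s); last by lia.
by apply: ars1; lia.
Qed.

Hypothesis small_stable : forall S : {set V G}, stable S -> #|S| <= #|V H|.

Let R := 2 ^ (#|V H|.+1 + #|V H|.+1).

Lemma big_clique (A : {set V G}) : R <= #|A| ->
  exists2 K : {set V G}, K \subset A & clique K /\ #|V H| < #|K|.
Proof. by case/ramsey => // -[S _ [/small_stable]]; lia. Qed.

Hypothesis noH : ~ Hst_iota G l.-1 0 H.

Lemma few_nonneighbours : cliques_plus l (@union_clique K1 H) ->
  forall v : V G, #|[set w | ~~ adj v w]| <= R.
Proof.
move=> /union_iota_clique uK1 v.
rewrite (cardsD1 v) inE adj_irr add1n ltnNge.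
apply/negP => /big_clique[K KN [cK cardK]].
apply: noH; apply: (@Hst_iota_of_iota_clique K1 G H l false (fun _ => v) K) => //.
- by move=> [[|?] ?] [[|?] ?] // _; apply: ord_inj.
- by move=> i j; rewrite adj_irr /= /mkadj andbF.
- by move=> _ k /(subsetP KN); rewrite !inE => /andP[vk /negbTE]; rewrite eq_sym.
Qed.

Lemma no_induced_join (J : sgraph) : cliques_plus l (@iota_clique J true H) ->
  (forall v : V G, #|[set w | ~~ adj v w]| <= R) -> #|V J| * R + R <= #|V G| ->
  ~ induced J G.
Proof.
move=> hJ fewR cardG [e [einj eadj]].
have [|W cardW adjW] := @common_neighbours G R [set e j | j : V J] fewR.
  by apply: leq_trans cardG; rewrite leq_add2r leq_mul2r leq_imset_card orbT.
have [K KW [cK cardK]] := big_clique cardW.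
apply: noH (Hst_iota_of_iota_clique hJ einj eadj cK cardK _) => j k kK.
have aek : adj (e j) k by apply: adjW (subsetP KW k kK); apply: imset_f.
by split=> //; apply: contraTneq aek => ->; rewrite adj_irr.
Qed.

End ReducedGraph.

Lemma at_most_one_nonedge_star (G : sgraph) : at_most_one_nonedge G -> star 2 G.
Proof.
move=> one.
have [/existsP[u /existsP[v nuv]]|none] :=
  boolP [exists u : V G, exists v : V G, nonedge u v].
  have nonedgeS (x y : V G) : nonedge x y -> y \in [set u; v].
    by move/one/(_ nuv) <-; rewrite !inE eqxx orbT.
  exists [set u; v]; split; first by rewrite cards2; case: (u != v).
  split=> [|x xS]; left => y.
    move=> z; rewrite !in_setC => _ zS yz; apply: contraNT zS => nyz.
    by apply: (nonedgeS y); rewrite /nonedge yz.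
  move=> yS; apply: contraNT (yS) => nxy; apply: (nonedgeS x).
  by rewrite /nonedge nxy andbT; apply: contraNneq yS => <-.
exists set0; split; first by rewrite cards0.
split=> [|x]; last by rewrite inE.
left => x y _ _ xy; apply: contraNT none => nxy.
by apply/existsP; exists x; apply/existsP; exists y; rewrite /nonedge xy.
Qed.

Lemma ARS_reduced_at_most_one_nonedge (H : sgraph) l : ARS H l ->
  exists n0, forall G : sgraph,
    reduced (Forb H) G -> n0 <= #|V G| -> at_most_one_nonedge G.
Proof.
move=> ars; have [l_gt0 ars1 [uK1 jS3 jC4 jP3] _] := ars.
pose R := 2 ^ (#|V H|.+1 + #|V H|.+1).
exists (5 * R) => G redG cardG.
have [s s_le noH] := reduced_Forb (ARS_chi_c ars) redG.
have lt_sl : s < l by lia.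
have small_stable := reduced_small_stable ars1 lt_sl noH.
have [|K _ [cK cardK]] := @big_clique H G small_stable [set: V G].
  by rewrite cardsT; lia.
have s0 : s = 0.
  apply/eqP; apply: contraTT cardK; rewrite -lt0n -leqNgt => s_gt0.
  by apply: (reduced_small_clique ars1 _ noH cK); lia.
subst s; have fewR := few_nonneighbours small_stable noH uK1.
have no_join J : cliques_plus l (@join_clique J H) -> #|V J| <= 4 -> ~ induced J G.
  move=> /join_iota_clique hJ cardJ; apply: (no_induced_join small_stable noH hJ fewR).
  by apply: leq_trans cardG; rewrite -/R mulSn addnC leq_add2l leq_mul2r cardJ orbT.
move=> u v u' v' nuv nu'v'; apply/eqP/negPn/negP => ne.
by case: (two_nonedges_induced nuv nu'v' ne); apply: no_join; rewrite ?card_ord.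
Qed.

Unset Implicit Arguments.

Theorem corollary3p3 (H : sgraph) (l : nat) :
  ARS H l ->
  [/\ chi_c (Forb H) l,
      (exists n0 : nat, forall G : sgraph,
          reduced (Forb H) G -> n0 <= #|V G| -> at_most_one_nonedge G) &
      critical 2 H].
Proof.
move=> ars; have [n0 reduced_one] := ARS_reduced_at_most_one_nonedge ars.
split; [exact: ARS_chi_c | by exists n0 |].
by exists n0 => K redK cardK; apply/at_most_one_nonedge_star/reduced_one.
Qed.
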